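(* Let $G_1=(V,E_1,L)$ and $G_2=(V,E_2,L)$ be hypergraphs with loops with the same node set and the same loops (with the same signs), and with $E_1\subseteq E_2$. Then a formulation for $\mathrm{PP}(G_2)$ is an extended formulation for $\mathrm{PP}(G_1)$; that is, $\mathrm{PP}(G_1)$ equals the projection of $\mathrm{PP}(G_2)$ onto the coordinates indexed by $V\cup E_1\cup L$.
   Context: A hypergraph with loops is $G=(V,E,L)$: $V$ a finite node set, $E$ a set of subsets of $V$ of cardinality at least two, $L$ a set of loops $\{i,i\}$, $i\in V$, partitioned as $L=L^-\cup L^+$ (minus/plus loops). $\mathrm{PP}(G):=\mathrm{conv}\{z\in\mathbb{R}^{V\cup E\cup L}: z_{ii}\ge z_i^2\ \forall\{i,i\}\in L^+,\ z_{ii}\le z_i^2\ \forall \{i,i\}\in L^-,\ z_e=\prod_{i\in e}z_i\ \forall e\in E,\ z_i\in[0,1]\ \forall i\in V\}$. *)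

From HB Require Import structures.
From mathcomp Require Import all_boot all_order all_algebra.
From mathcomp Require Import reals.
Set Implicit Arguments. Unset Strict Implicit. Unset Printing Implicit Defensive.
Import Order.TTheory GRing.Theory Num.Theory.
Local Open Scope ring_scope.

(* A hypergraph with loops on node set V (a finite type):
   E : {set {set V}} the hyperedges (each of cardinality >= 2),
   Lm, Lp : {set V} the nodes carrying a minus / plus loop (disjoint);
   L = Lm :|: Lp is the set of loops, loop {i,i} identified with node i. *)
Definition hyperedges_ok (V : finType) (E : {set {set V}}) : Prop :=
  forall e, e \in E -> (2 <= #|e|)%N.

Definition hcoord (V : finType) (E : {set {set V}}) (L : {set V}) : Type :=
  (V + ({e : {set V} | e \in E} + {i : V | i \in L}))%type.

Definition cnode {V : finType} {E : {set {set V}}} {L : {set V}} (i : V)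
  : hcoord E L := inl i.
Definition cedge {V : finType} {E : {set {set V}}} {L : {set V}}
  (e : {e : {set V} | e \in E}) : hcoord E L := inr (inl e).
Definition cloop {V : finType} {E : {set {set V}}} {L : {set V}}
  (i : {i : V | i \in L}) : hcoord E L := inr (inr i).

Definition conv (R : realType) (I : Type) (S : (I -> R) -> Prop) (z : I -> R)
  : Prop :=
  exists (n : nat) (lam : 'I_n -> R) (x : 'I_n -> I -> R),
    (forall k, 0 <= lam k) /\ \sum_(k < n) lam k = 1 /\
    (forall k, S (x k)) /\ (forall c, z c = \sum_(k < n) lam k * x k c).

Definition PPset (R : realType) (V : finType) (E : {set {set V}})
  (Lm Lp : {set V}) (z : hcoord E (Lm :|: Lp) -> R) : Prop :=
  (forall l : {i : V | i \in Lm :|: Lp},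
      val l \in Lp -> z (cloop l) >= z (cnode (val l)) ^+ 2) /\
  (forall l : {i : V | i \in Lm :|: Lp},
      val l \in Lm -> z (cloop l) <= z (cnode (val l)) ^+ 2) /\
  (forall e : {e : {set V} | e \in E},
      z (cedge e) = \prod_(i in val e) z (cnode i)) /\
  (forall i : V, 0 <= z (cnode i) <= 1).

Definition PP (R : realType) (V : finType) (E : {set {set V}})
  (Lm Lp : {set V}) : (hcoord E (Lm :|: Lp) -> R) -> Prop :=
  conv (@PPset R V E Lm Lp).

Definition lift_edge (V : finType) (E1 E2 : {set {set V}})
  (sub : E1 \subset E2) (e : {e : {set V} | e \in E1})
  : {e : {set V} | e \in E2} :=
  exist _ (val e) (subsetP sub _ (valP e)).

Definition projPP (R : realType) (V : finType) (E1 E2 : {set {set V}})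
  (L : {set V}) (sub : E1 \subset E2) (z : hcoord E2 L -> R)
  : hcoord E1 L -> R :=
  fun c => match c with
           | inl i => z (cnode i)
           | inr (inl e) => z (cedge (lift_edge sub e))
           | inr (inr l) => z (cloop l)
           end.
Arguments PP {R V} E Lm Lp.

(* Projecting PP(G2) onto the coordinates of G1 forgets the edges of E2 \ E1,
   and a point of the defining set of PP(G1) lifts back to the defining set of
   PP(G2) by filling each new edge coordinate with the product of its node
   coordinates.  Both maps are compatible with convex combinations: the
   projection because it is linear, the lifting because it is applied to the
   generating points only. *)
From HB Require Import structures.
From mathcomp Require Import all_boot all_order all_algebra.
From mathcomp Require Import reals.
From Stdlib Require Import FunctionalExtensionality.
Set Implicit Arguments. Unset Strict Implicit. Unset Printing Implicit Defensive.
Import Order.TTheory GRing.Theory Num.Theory.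
Local Open Scope ring_scope.

Section ConvexHullProjection.

Variables (R : realType) (I J : Type).
Variables (S : (I -> R) -> Prop) (T : (J -> R) -> Prop) (g : J -> I).

Lemma conv_comp :
  (forall y, S y -> T (y \o g)) -> forall z, conv S z -> conv T (z \o g).
Proof.
move=> ST z [n [lam [y [lam_ge0 [lam_sum1 [Sy zE]]]]]].
exists n, lam, (fun k => y k \o g); do 3!split=> //.
  by move=> k; apply: ST.
by move=> c; rewrite /= zE.
Qed.

Lemma conv_lift (lift : (J -> R) -> I -> R) :
  (forall x, T x -> S (lift x) /\ lift x \o g = x) ->
  forall z, conv T z -> exists z2, conv S z2 /\ z = z2 \o g.
Proof.
move=> TS z [n [lam [x [lam_ge0 [lam_sum1 [Tx zE]]]]]].
exists (fun c => \sum_(k < n) lam k * lift (x k) c); split.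
  exists n, lam, (fun k => lift (x k)); do 3!split=> //.
  by move=> k; case: (TS _ (Tx k)).
apply: functional_extensionality => c; rewrite zE /=.
apply: eq_bigr => k _; have [_ lift_xK] := TS _ (Tx k).
by rewrite -{1}lift_xK.
Qed.

Lemma conv_projection (lift : (J -> R) -> I -> R) :
  (forall y, S y -> T (y \o g)) ->
  (forall x, T x -> S (lift x) /\ lift x \o g = x) ->
  forall z, conv T z <-> exists z2, conv S z2 /\ z = z2 \o g.
Proof.
move=> ST TS z; split; first exact: conv_lift TS z.
by case=> z2 [Sz2 ->]; apply: conv_comp.
Qed.

End ConvexHullProjection.

Section HypergraphMonotonicity.

Variables (R : realType) (V : finType) (E1 E2 : {set {set V}}) (Lm Lp : {set V}).
Hypothesis sub : E1 \subset E2.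

Local Notation L := (Lm :|: Lp).

Definition hcoord_incl (c : hcoord E1 L) : hcoord E2 L :=
  match c with
  | inl i => cnode i
  | inr (inl e) => cedge (lift_edge sub e)
  | inr (inr l) => cloop l
  end.

Definition edge_products (x : hcoord E1 L -> R) : hcoord E2 L -> R :=
  fun c => match c with
           | inl i => x (cnode i)
           | inr (inl e) => \prod_(i in val e) x (cnode i)
           | inr (inr l) => x (cloop l)
           end.

Lemma projPP_incl (z : hcoord E2 L -> R) : projPP sub z = z \o hcoord_incl.
Proof. by apply: functional_extensionality; case=> [i|[e|l]]. Qed.

Lemma PPset_incl (y : hcoord E2 L -> R) :
  PPset y -> PPset (y \o hcoord_incl).
Proof. by case=> Hp [Hm [He Hn]]; do 3!split=> //; move=> e; apply: He. Qed.

Lemma PPset_edge_products (x : hcoord E1 L -> R) :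
  PPset x ->
  PPset (edge_products x) /\ edge_products x \o hcoord_incl = x.
Proof.
case=> Hp [Hm [He Hn]]; split; first by do 3!split=> //.
by apply: functional_extensionality; case=> [i|[e|l]] //=; rewrite He.
Qed.

End HypergraphMonotonicity.

Theorem lemma3 (R : realType) (V : finType) (E1 E2 : {set {set V}})
  (Lm Lp : {set V})
  (hE1 : hyperedges_ok E1) (hE2 : hyperedges_ok E2)
  (hL : [disjoint Lm & Lp]) (sub : E1 \subset E2) :
  forall z : hcoord E1 (Lm :|: Lp) -> R,
    PP E1 Lm Lp z <->
    exists z2 : hcoord E2 (Lm :|: Lp) -> R,
      PP E2 Lm Lp z2 /\ z = projPP sub z2.
Proof.
move=> z; rewrite /PP (conv_projection (PPset_incl sub) (PPset_edge_products sub)).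
by split=> -[z2 Hz2]; exists z2; move: Hz2; rewrite projPP_incl.
Qed.
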